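(* Let $L\subseteq Q$ be a dense extension of Lie algebras with $Z(Q)=0$, and suppose that $A(Q)$ is right ideally absorbed into $A_0$. Then $Q$ is an algebra of quotients of $L$.
   Context: Lie algebras over a commutative unital ring $\Phi$. $\mathrm{ad}_x(y)=[x,y]$; $A(Q)$ is the associative subalgebra of $\mathrm{End}_\Phi(Q)$ generated by all $\mathrm{ad}_x$, $x\in Q$; $M(Q)$ is generated by the identity and all $\mathrm{ad}_x$. $A_0=\{\mu\in A(Q):\mu(L)\subseteq L\}$. $Z(Q)=\{a\in Q:[a,Q]=0\}$. An extension $L\subseteq Q$ is dense if the only $\mu\in M(Q)$ with $\mu(L)=0$ is $\mu=0$. For associative algebras $A\subseteq S$, $S$ is right ideally absorbed into $A$ if for every nonzero $q\in S$ there is a two-sided ideal $I$ of $A$ with $\mathrm{l.ann}_A(I)=\{a\in A:aI=0\}=0$ and $0\ne qI\subseteq A$. $Q$ is an algebra of quotients of $L$ if for every nonzero $q\in Q$ there is an ideal $J$ of $L$ with $\mathrm{Ann}_L(J)=\{a\in L:[a,J]=0\}=0$ and $0\ne[J,q]\subseteq L$. *)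

From HB Require Import structures.
From mathcomp Require Import all_boot all_algebra.
Set Implicit Arguments. Unset Strict Implicit. Unset Printing Implicit Defensive.
Import GRing.Theory.
Local Open Scope ring_scope.

Section LieDefs.
Variables (Phi : comPzRingType) (Q : lmodType Phi) (br : Q -> Q -> Q).

Definition lie_bracket : Prop :=
  [/\ forall (a : Phi) (x y z : Q), br (a *: x + y) z = a *: br x z + br y z,
      forall (a : Phi) (x y z : Q), br x (a *: y + z) = a *: br x y + br x z,
      forall x : Q, br x x = 0 &
      forall x y z : Q, br x (br y z) + br y (br z x) + br z (br x y) = 0].

Definition lie_subalgebra (L : Q -> Prop) : Prop :=
  [/\ L 0,
      forall (a : Phi) x y, L x -> L y -> L (a *: x + y) &
      forall x y, L x -> L y -> L (br x y)].

Definition ad (x : Q) : Q -> Q := fun y => br x y.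

Inductive inA : (Q -> Q) -> Prop :=
  | inA_ad x : inA (ad x)
  | inA_add f g : inA f -> inA g -> inA (fun v => f v + g v)
  | inA_comp f g : inA f -> inA g -> inA (fun v => f (g v))
  | inA_scale (c : Phi) f : inA f -> inA (fun v => c *: f v).

(* M(Q): the subalgebra generated by the identity and the ad_x,
   i.e. Phi*id + A(Q) *)
Definition inM (mu : Q -> Q) : Prop :=
  exists (c : Phi) (f : Q -> Q), inA f /\ mu = (fun v => c *: v + f v).

Definition inA0 (L : Q -> Prop) (mu : Q -> Q) : Prop :=
  inA mu /\ forall x, L x -> L (mu x).

Definition center_zero : Prop :=
  forall a : Q, (forall y, br a y = 0) -> a = 0.

Definition dense_ext (L : Q -> Prop) : Prop :=
  forall mu, inM mu -> (forall x, L x -> mu x = 0) -> mu = (fun _ => 0).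

Definition alg_ideal (A I : (Q -> Q) -> Prop) : Prop :=
  [/\ forall f, I f -> A f,
      I (fun _ => 0),
      forall f g, I f -> I g -> I (fun v => f v + g v),
      forall (c : Phi) f, I f -> I (fun v => c *: f v) &
      forall a f, A a -> I f -> I (fun v => a (f v)) /\ I (fun v => f (a v))].

Definition right_ideally_absorbed (S A : (Q -> Q) -> Prop) : Prop :=
  forall q, S q -> q <> (fun _ => 0) ->
  exists I, [/\ alg_ideal A I,
     (forall a, A a -> (forall i, I i -> (fun v => a (i v)) = (fun _ => 0)) ->
        a = (fun _ => 0)),
     (forall i, I i -> A (fun v => q (i v))) &
     exists i, I i /\ (fun v => q (i v)) <> (fun _ => 0)].

Definition lie_ideal (L J : Q -> Prop) : Prop :=
  [/\ forall x, J x -> L x,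
      J 0,
      forall (a : Phi) x y, J x -> J y -> J (a *: x + y) &
      forall x y, L x -> J y -> J (br x y)].

Definition algebra_of_quotients (L : Q -> Prop) : Prop :=
  forall q : Q, q <> 0 ->
  exists J, [/\ lie_ideal L J,
     (forall a, L a -> (forall j, J j -> br a j = 0) -> a = 0),
     (forall j, J j -> L (br j q)) &
     exists j, J j /\ br j q <> 0].

End LieDefs.

(* Let I be the ideal of A_0 that absorbs ad_q, and let J be the Phi-span of
   I(L).  J is a Lie ideal of L because ad_x lies in A_0 for x in L; moreover
   [J, q] = -ad_q(I(L)) lies in L because ad_q I lies in A_0.  If [a, J] = 0
   with a in L, then every ad_a i (i in I) is an element of A(Q) vanishing on
   L, hence zero by density; as ad_a lies in A_0 and I has zero left
   annihilator there, ad_a = 0, so a is central and a = 0.  Finally some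
   ad_q i0 is nonzero, so by density it is nonzero at some x in L, and
   j = i0 x is an element of J with [j, q] <> 0. *)
From Stdlib Require Import FunctionalExtensionality Classical.
From mathcomp Require Import all_boot all_algebra.
Set Implicit Arguments. Unset Strict Implicit.
Import GRing.Theory.
Local Open Scope ring_scope.

Section LieBracket.
Variables (Phi : comPzRingType) (Q : lmodType Phi) (br : Q -> Q -> Q).
Hypothesis brZDl : forall (a : Phi) (x y z : Q), br (a *: x + y) z = a *: br x z + br y z.
Hypothesis brZDr : forall (a : Phi) (x y z : Q), br x (a *: y + z) = a *: br x y + br x z.
Hypothesis brxx : forall x : Q, br x x = 0.

Lemma lie_br0l (z : Q) : br 0 z = 0.
Proof. by have := brZDl (-1) z z z; rewrite !scaleN1r !addNr. Qed.

Lemma lie_br0r (z : Q) : br z 0 = 0.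
Proof. by have := brZDr (-1) z z z; rewrite !scaleN1r !addNr. Qed.

Lemma lie_brDl (x y z : Q) : br (x + y) z = br x z + br y z.
Proof. by rewrite -{1}(scale1r x) brZDl scale1r. Qed.

Lemma lie_brDr (x y z : Q) : br z (x + y) = br z x + br z y.
Proof. by rewrite -{1}(scale1r x) brZDr scale1r. Qed.

Lemma lie_brC (x y : Q) : br x y = - br y x.
Proof.
apply/eqP; rewrite -addr_eq0; apply/eqP.
by have := brxx (x + y); rewrite lie_brDl !lie_brDr !brxx add0r addr0.
Qed.

Lemma ad_eq0_center (q : Q) :
  center_zero br -> ad br q = (fun _ => 0) -> q = 0.
Proof. by move=> cz adq0; apply: cz => y; have := f_equal (fun f => f y) adq0. Qed.

Section Subalgebra.
Variable L : Q -> Prop.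
Hypotheses (L0 : L 0) (LZD : forall (a : Phi) x y, L x -> L y -> L (a *: x + y))
  (Lbr : forall x y, L x -> L y -> L (br x y)).

Lemma lie_subalgN (z : Q) : L z -> L (- z).
Proof. by move=> Lz; have := @LZD (-1) z 0 Lz L0; rewrite scaleN1r addr0. Qed.

Lemma ad_inA0 (x : Q) : L x -> inA0 br L (ad br x).
Proof. by move=> Lx; split=> [|y Ly]; [exact: inA_ad | exact: Lbr]. Qed.

Lemma dense_inA mu :
  dense_ext br L -> inA br mu -> (forall x, L x -> mu x = 0) ->
  mu = (fun _ => 0).
Proof.
move=> dense Amu mu0; apply: dense mu0; exists 0, mu; split => //.
by apply: functional_extensionality => v; rewrite scale0r add0r.
Qed.

Inductive ideal_span (I : (Q -> Q) -> Prop) : Q -> Prop :=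
  | ideal_span0 : ideal_span I 0
  | ideal_span_gen i x : I i -> L x -> ideal_span I (i x)
  | ideal_span_lin (a : Phi) x y :
      ideal_span I x -> ideal_span I y -> ideal_span I (a *: x + y).

Variable I : (Q -> Q) -> Prop.
Hypothesis idealI : alg_ideal (inA0 br L) I.

Lemma ideal_span_sub x : ideal_span I x -> L x.
Proof.
move: (idealI) => [IA0 _ _ _ _].
elim=> [|i y Ii Ly|a u v _ Lu _ Lv]; [exact: L0 | | exact: LZD].
by have [_] := IA0 _ Ii; apply.
Qed.

Lemma ideal_span_lie_ideal : lie_ideal br L (ideal_span I).
Proof.
move: (idealI) => [_ _ _ _ Imul].
split; [exact: ideal_span_sub | exact: ideal_span0 | exact: ideal_span_lin |].
move=> x y Lx; elim=> [|i z Ii Lz|a u v _ Ju _ Jv].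
- by rewrite lie_br0r; apply: ideal_span0.
- have [adxI _] := Imul _ _ (ad_inA0 Lx) Ii.
  exact: (ideal_span_gen adxI Lz).
- by rewrite brZDr; apply: ideal_span_lin.
Qed.

Lemma ideal_span_ann0 a :
  dense_ext br L -> center_zero br ->
  (forall b, inA0 br L b -> (forall i, I i -> (fun v => b (i v)) = (fun _ => 0)) ->
     b = (fun _ => 0)) ->
  L a -> (forall j, ideal_span I j -> br a j = 0) -> a = 0.
Proof.
move=> dense cz lannI La aJ0; move: (idealI) => [IA0 _ _ _ _].
apply: ad_eq0_center => //; apply: lannI (ad_inA0 La) _ => i Ii.
apply: dense_inA => //; last by move=> x Lx; apply: aJ0; apply: ideal_span_gen.
by apply: inA_comp; [exact: inA_ad | have [] := IA0 _ Ii].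
Qed.

Lemma ideal_span_brL q :
  (forall i, I i -> inA0 br L (fun v => ad br q (i v))) ->
  forall j, ideal_span I j -> L (br j q).
Proof.
move=> adqI j; elim=> [|i x Ii Lx|a u v _ Lu _ Lv].
- by rewrite lie_br0l.
- by rewrite lie_brC; apply: lie_subalgN; have [_] := adqI _ Ii; apply.
- by rewrite brZDl; apply: LZD.
Qed.

Lemma ideal_span_brq_neq0 q i0 :
  dense_ext br L -> I i0 -> (fun v => ad br q (i0 v)) <> (fun _ => 0) ->
  exists j, ideal_span I j /\ br j q <> 0.
Proof.
move=> dense Ii0 adqi0; move: (idealI) => [IA0 _ _ _ _].
have [x [Lx adqi0x]] : exists x, L x /\ ad br q (i0 x) <> 0.
  apply: NNPP => none; apply: adqi0; apply: dense_inA => //.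
    by apply: inA_comp; [exact: inA_ad | have [] := IA0 _ Ii0].
  by move=> x Lx; apply: NNPP => adqi0x; apply: none; exists x.
exists (i0 x); split; first exact: ideal_span_gen.
by rewrite lie_brC => /eqP; rewrite oppr_eq0 => /eqP.
Qed.

End Subalgebra.
End LieBracket.

Theorem mainTheorem20 (Phi : comPzRingType) (Q : lmodType Phi)
  (br : Q -> Q -> Q) (L : Q -> Prop) :
  lie_bracket br -> lie_subalgebra br L ->
  dense_ext br L -> center_zero br ->
  right_ideally_absorbed (inA br) (inA0 br L) ->
  algebra_of_quotients br L.
Proof.
move=> [brZDl brZDr brxx _] [L0 LZD Lbr] dense cz absorbed q q_neq0.
have adq_neq0 : ad br q <> (fun _ => 0) by move/(ad_eq0_center cz).
have [I [idealI lannI adqI [i0 [Ii0 adqi0]]]] := absorbed _ (inA_ad br q) adq_neq0.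
exists (ideal_span L I); split.
- exact: ideal_span_lie_ideal.
- by move=> a; apply: ideal_span_ann0.
- exact: ideal_span_brL.
- exact: ideal_span_brq_neq0 Ii0 adqi0.
Qed.
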